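(* The maximal Lie algebra of point symmetries (maximal invariance algebra in the sense of Lie) of the partial differential equation $$u_t+(u_x+u_{xx})^2=0$$ for $u=u(t,x)$ is five-dimensional, with basis $$X_1=-\partial_x,\quad X_2=-e^{-x}\partial_u,\quad X_3=\partial_t,\quad X_4=\partial_u,\quad X_5=t\partial_t-u\partial_u,$$ whose only non-zero commutators are $[X_1,X_2]=X_2$, $[X_2,X_5]=-X_2$, $[X_3,X_5]=X_3$, $[X_4,X_5]=-X_4$. *)

From Stdlib Require Import Reals List.
From Coquelicot Require Import Coquelicot.
Open Scope R_scope.

(** Functions of the independent/dependent variables (t, x, u). *)
Definition fn3 := R -> R -> R -> R.

Definition d_t (f : fn3) : fn3 := fun t x u => Derive (fun s => f s x u) t.
Definition d_x (f : fn3) : fn3 := fun t x u => Derive (fun s => f t s u) x.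
Definition d_u (f : fn3) : fn3 := fun t x u => Derive (fun s => f t x s) u.

Definition pd (i : nat) : fn3 -> fn3 :=
  match i with 0 => d_t | 1 => d_x | _ => d_u end.

Fixpoint iterd (l : list nat) (f : fn3) : fn3 :=
  match l with nil => f | i :: l' => pd i (iterd l' f) end.

Definition unc3 (f : fn3) : R * R * R -> R :=
  fun p => f (fst (fst p)) (snd (fst p)) (snd p).

Definition smooth3 (f : fn3) : Prop :=
  forall (l : list nat) (t x u : R),
    continuous (unc3 (iterd l f)) (t, x, u) /\
    ex_derive (fun s => iterd l f s x u) t /\
    ex_derive (fun s => iterd l f t s u) x /\
    ex_derive (fun s => iterd l f t x s) u.

(** Vector fields  tau d_t + xi d_x + eta d_u  on the (t,x,u)-space. *)
Record vfield := VF { v_t : fn3 ; v_x : fn3 ; v_u : fn3 }.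

Definition smooth_vf (Q : vfield) : Prop :=
  smooth3 (v_t Q) /\ smooth3 (v_x Q) /\ smooth3 (v_u Q).

Definition vf_eq (P Q : vfield) : Prop :=
  forall t x u, v_t P t x u = v_t Q t x u /\ v_x P t x u = v_x Q t x u
             /\ v_u P t x u = v_u Q t x u.

Definition vf_add (P Q : vfield) : vfield :=
  VF (fun t x u => v_t P t x u + v_t Q t x u)
     (fun t x u => v_x P t x u + v_x Q t x u)
     (fun t x u => v_u P t x u + v_u Q t x u).

Definition vf_scale (c : R) (P : vfield) : vfield :=
  VF (fun t x u => c * v_t P t x u) (fun t x u => c * v_x P t x u)
     (fun t x u => c * v_u P t x u).

Definition vf_zero : vfield := VF (fun _ _ _ => 0) (fun _ _ _ => 0) (fun _ _ _ => 0).

Definition vf_apply (P : vfield) (f : fn3) : fn3 :=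
  fun t x u => v_t P t x u * d_t f t x u + v_x P t x u * d_x f t x u
               + v_u P t x u * d_u f t x u.

Definition vf_bracket (P Q : vfield) : vfield :=
  VF (fun t x u => vf_apply P (v_t Q) t x u - vf_apply Q (v_t P) t x u)
     (fun t x u => vf_apply P (v_x Q) t x u - vf_apply Q (v_x P) t x u)
     (fun t x u => vf_apply P (v_u Q) t x u - vf_apply Q (v_u P) t x u).

(** ---- Second prolongation (Olver's formula eta^J = D_J(eta - tau u_t - xi u_x)
    + tau u_{J,t} + xi u_{J,x}, written recursively). ---- *)

Definition TD0t (f : fn3) (t x u ut : R) : R := d_t f t x u + ut * d_u f t x u.
Definition TD0x (f : fn3) (t x u ux : R) : R := d_x f t x u + ux * d_u f t x u.

(** Functions on the first jet space, arguments (t, x, u, u_t, u_x). *)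
Definition fn5 := R -> R -> R -> R -> R -> R.

Definition TD1t (F : fn5) (t x u ut ux utt utx uxx : R) : R :=
  Derive (fun s => F s x u ut ux) t + ut * Derive (fun s => F t x s ut ux) u
  + utt * Derive (fun s => F t x u s ux) ut + utx * Derive (fun s => F t x u ut s) ux.
Definition TD1x (F : fn5) (t x u ut ux utt utx uxx : R) : R :=
  Derive (fun s => F t s u ut ux) x + ux * Derive (fun s => F t x s ut ux) u
  + utx * Derive (fun s => F t x u s ux) ut + uxx * Derive (fun s => F t x u ut s) ux.

Definition eta_t (Q : vfield) : fn5 := fun t x u ut ux =>
  TD0t (v_u Q) t x u ut - ut * TD0t (v_t Q) t x u ut - ux * TD0t (v_x Q) t x u ut.
Definition eta_x (Q : vfield) : fn5 := fun t x u ut ux =>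
  TD0x (v_u Q) t x u ux - ut * TD0x (v_t Q) t x u ux - ux * TD0x (v_x Q) t x u ux.

Definition eta_tt (Q : vfield) (t x u ut ux utt utx uxx : R) : R :=
  TD1t (eta_t Q) t x u ut ux utt utx uxx
  - utt * TD0t (v_t Q) t x u ut - utx * TD0t (v_x Q) t x u ut.
Definition eta_tx (Q : vfield) (t x u ut ux utt utx uxx : R) : R :=
  TD1x (eta_t Q) t x u ut ux utt utx uxx
  - utt * TD0x (v_t Q) t x u ux - utx * TD0x (v_x Q) t x u ux.
Definition eta_xx (Q : vfield) (t x u ut ux utt utx uxx : R) : R :=
  TD1x (eta_x Q) t x u ut ux utt utx uxx
  - utx * TD0x (v_t Q) t x u ux - uxx * TD0x (v_x Q) t x u ux.

(** Second-order differential functions Delta(t,x,u,ut,ux,utt,utx,uxx). *)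
Definition fn8 := R -> R -> R -> R -> R -> R -> R -> R -> R.

Definition pr2_apply (Q : vfield) (D : fn8) (t x u ut ux utt utx uxx : R) : R :=
    v_t Q t x u * Derive (fun s => D s x u ut ux utt utx uxx) t
  + v_x Q t x u * Derive (fun s => D t s u ut ux utt utx uxx) x
  + v_u Q t x u * Derive (fun s => D t x s ut ux utt utx uxx) u
  + eta_t Q t x u ut ux * Derive (fun s => D t x u s ux utt utx uxx) ut
  + eta_x Q t x u ut ux * Derive (fun s => D t x u ut s utt utx uxx) ux
  + eta_tt Q t x u ut ux utt utx uxx * Derive (fun s => D t x u ut ux s utx uxx) utt
  + eta_tx Q t x u ut ux utt utx uxx * Derive (fun s => D t x u ut ux utt s uxx) utx
  + eta_xx Q t x u ut ux utt utx uxx * Derive (fun s => D t x u ut ux utt utx s) uxx.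

Definition infinitesimal_symmetry (D : fn8) (Q : vfield) : Prop :=
  forall t x u ut ux utt utx uxx,
    D t x u ut ux utt utx uxx = 0 -> pr2_apply Q D t x u ut ux utt utx uxx = 0.

Definition in_max_Lie_algebra (D : fn8) (Q : vfield) : Prop :=
  smooth_vf Q /\ infinitesimal_symmetry D Q.

Definition DeltaEq : fn8 := fun t x u ut ux utt utx uxx => ut + (ux + uxx) ^ 2.

Definition X1 : vfield := VF (fun _ _ _ => 0) (fun _ _ _ => -1) (fun _ _ _ => 0).
Definition X2 : vfield := VF (fun _ _ _ => 0) (fun _ _ _ => 0) (fun _ x _ => - exp (- x)).
Definition X3 : vfield := VF (fun _ _ _ => 1) (fun _ _ _ => 0) (fun _ _ _ => 0).
Definition X4 : vfield := VF (fun _ _ _ => 0) (fun _ _ _ => 0) (fun _ _ _ => 1).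
Definition X5 : vfield := VF (fun t _ _ => t) (fun _ _ _ => 0) (fun _ _ u => - u).

Definition lincomb5 (c1 c2 c3 c4 c5 : R) : vfield :=
  vf_add (vf_scale c1 X1) (vf_add (vf_scale c2 X2) (vf_add (vf_scale c3 X3)
    (vf_add (vf_scale c4 X4) (vf_scale c5 X5)))).

Definition in_span5 (Q : vfield) : Prop :=
  exists c1 c2 c3 c4 c5 : R, vf_eq Q (lincomb5 c1 c2 c3 c4 c5).

(* On the equation, u_t = -(u_x + u_xx)^2, the second prolongation criterion becomes a
   polynomial identity in the free jet coordinates u_x, u_x + u_xx and u_tx.  Its coefficients
   are the determining equations
     tau_x = tau_u = xi_t = xi_u = eta_t = 0,   eta_u = 4 xi_x - tau_t,
     eta_x + eta_xx = 0,   xi_x + eta_ux + eta_xu = xi_xx.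
   Separating variables, tau_t is a constant k and eta is affine in u with slope 4 xi_x - k.
   The last two equations then become xi_x + 7 xi_xx = 0 and xi_xx + xi_xxx = 0, which force
   xi to be constant, while eta(x, 0) solves y' + y'' = 0, a combination of 1 and e^(-x).
   Conversely the functions a + b t + c e^(-x) + d u are closed under partial derivatives, so
   the criterion for the span of X1, ..., X5 and all brackets reduce to ring identities. *)

From Stdlib Require Import Reals Lra FunctionalExtensionality List.
From Coquelicot Require Import Coquelicot.
Open Scope R_scope.

Lemma smooth3_ex_derive_t f l t x u : smooth3 f -> ex_derive (fun s => iterd l f s x u) t.
Proof. intros H; apply (H l t x u). Qed.

Lemma smooth3_ex_derive_x f l t x u : smooth3 f -> ex_derive (fun s => iterd l f t s u) x.
Proof. intros H; apply (H l t x u). Qed.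

Lemma smooth3_ex_derive_u f l t x u : smooth3 f -> ex_derive (fun s => iterd l f t x s) u.
Proof. intros H; apply (H l t x u). Qed.

Ltac partials_base f :=
  match f with
  | d_t ?g => partials_base g | d_x ?g => partials_base g | d_u ?g => partials_base g
  | _ => f
  end.

Ltac partials_list f :=
  match f with
  | d_t ?g => let l := partials_list g in constr:(0%nat :: l)
  | d_x ?g => let l := partials_list g in constr:(1%nat :: l)
  | d_u ?g => let l := partials_list g in constr:(2%nat :: l)
  | _ => constr:(@nil nat)
  end.

(* Recovers [l] with [F = iterd l f] from the nesting of partials, so that [smooth3 f] applies. *)
Ltac ex_derive_smooth :=
  match goal with
  | |- ex_derive (fun z => ?F z ?x ?u) ?t =>
      let l := partials_list F in let f := partials_base F in
      exact (smooth3_ex_derive_t f l t x u ltac:(assumption))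
  | |- ex_derive (fun z => ?F ?t z ?u) ?x =>
      let l := partials_list F in let f := partials_base F in
      exact (smooth3_ex_derive_x f l t x u ltac:(assumption))
  | |- ex_derive (fun z => ?F ?t ?x z) ?u =>
      let l := partials_list F in let f := partials_base F in
      exact (smooth3_ex_derive_u f l t x u ltac:(assumption))
  end.

Lemma is_derive_0_const (g : R -> R) : (forall z, is_derive g z 0) -> forall a b, g a = g b.
Proof.
  intros H a b. destruct (Rtotal_order a b) as [h|[h|h]].
  - apply eq_is_derive; auto.
  - now subst.
  - symmetry; apply eq_is_derive; auto.
Qed.

Lemma Derive_0_const (g : R -> R) :
  (forall z, ex_derive g z) -> (forall z, Derive g z = 0) -> forall a b, g a = g b.
Proof.
  intros Hg H0. apply is_derive_0_const. intro z. rewrite <- (H0 z). now apply Derive_correct.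
Qed.

Lemma Derive_const_affine (g : R -> R) k :
  (forall z, ex_derive g z) -> (forall z, Derive g z = k) -> forall z, g z = g 0 + k * z.
Proof.
  intros Hg Hk z.
  assert (E : g z - k * z = g 0 - k * 0).
  { apply (is_derive_0_const (fun s => g s - k * s)). intro y.
    auto_derive; [apply Hg | rewrite Hk; ring]. }
  lra.
Qed.

Lemma Derive_ext_eq0 (g : R -> R) z : (forall y, g y = 0) -> Derive g z = 0.
Proof. intros H. rewrite (Derive_ext _ (fun _ => 0)) by exact H. apply Derive_const. Qed.

Lemma ode_pair_eq0 (a b : R) (h : R -> R) : a <> b ->
  (forall z, ex_derive h z) -> (forall z, ex_derive (Derive h) z) ->
  (forall z, h z + a * Derive h z = 0) ->
  (forall z, Derive h z + b * Derive (Derive h) z = 0) ->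
  forall z, h z = 0.
Proof.
  intros Hab Hh Hh' Ha Hb z.
  assert (Ha' : Derive h z + a * Derive (Derive h) z = 0).
  { rewrite <- (Derive_ext_eq0 (fun y => h y + a * Derive h y) z Ha).
    symmetry. apply is_derive_unique. auto_derive; [split; auto|]. now rewrite !Rmult_1_l. }
  assert (H2 : (a - b) * Derive (Derive h) z = 0) by (specialize (Hb z); lra).
  destruct (Rmult_integral _ _ H2) as [H|H]; [lra|].
  specialize (Ha z); specialize (Hb z). nra.
Qed.

Lemma ode_d1_d2_solution (g : R -> R) :
  (forall z, ex_derive g z) -> (forall z, ex_derive (Derive g) z) ->
  (forall z, Derive g z + Derive (Derive g) z = 0) ->
  forall z, g z = g 0 + Derive g 0 * (1 - exp (- z)).
Proof.
  intros Hg Hg' H z.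
  assert (Hexp : forall y, exp y * Derive g y = Derive g 0).
  (* e^y g'(y) has derivative e^y (g' + g'') = 0 *)
  { intro y. transitivity (exp 0 * Derive g 0); [|rewrite exp_0; ring].
    apply (Derive_0_const (fun y => exp y * Derive g y)).
    - intro w. auto_derive. apply Hg'.
    - intro w. apply is_derive_unique. auto_derive; [apply Hg'|].
      change (fun x => Derive g x) with (Derive g). rewrite <- (Rmult_0_r (exp w)), <- (H w). ring. }
  assert (E : g z + Derive g 0 * exp (- z) = g 0 + Derive g 0 * exp (- 0)).
  { apply (Derive_0_const (fun y => g y + Derive g 0 * exp (- y))).
    - intro w. auto_derive. apply Hg.
    - intro w. apply is_derive_unique. auto_derive; [apply Hg|].
      rewrite <- (Hexp w), exp_Ropp. change (fun x => g x) with g. field. apply Rgt_not_eq, exp_pos. }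
  rewrite Ropp_0, exp_0 in E. lra.
Qed.

Lemma d_t_eq0_const f : smooth3 f ->
  (forall t x u, d_t f t x u = 0) -> forall t x u, f t x u = f 0 x u.
Proof.
  intros Hf H t x u. apply (Derive_0_const (fun s => f s x u)); [intro; ex_derive_smooth | intro; apply H].
Qed.

Lemma d_x_eq0_const f : smooth3 f ->
  (forall t x u, d_x f t x u = 0) -> forall t x u, f t x u = f t 0 u.
Proof.
  intros Hf H t x u. apply (Derive_0_const (fun s => f t s u)); [intro; ex_derive_smooth | intro; apply H].
Qed.

Lemma d_u_eq0_const f : smooth3 f ->
  (forall t x u, d_u f t x u = 0) -> forall t x u, f t x u = f t x 0.
Proof.
  intros Hf H t x u. apply (Derive_0_const (fun s => f t x s)); [intro; ex_derive_smooth | intro; apply H].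
Qed.

Lemma fold_d_x (f : fn3) t x u : Derive (fun z => f t z u) x = d_x f t x u.
Proof. reflexivity. Qed.

Lemma fold_d_u (f : fn3) t x u : Derive (fun z => f t x z) u = d_u f t x u.
Proof. reflexivity. Qed.

Lemma d_t_ext (f g : fn3) : (forall t x u, f t x u = g t x u) -> forall t x u, d_t f t x u = d_t g t x u.
Proof. intros H t x u. apply Derive_ext. intro; apply H. Qed.

Lemma d_x_ext (f g : fn3) : (forall t x u, f t x u = g t x u) -> forall t x u, d_x f t x u = d_x g t x u.
Proof. intros H t x u. apply Derive_ext. intro; apply H. Qed.

Lemma d_u_ext (f g : fn3) : (forall t x u, f t x u = g t x u) -> forall t x u, d_u f t x u = d_u g t x u.
Proof. intros H t x u. apply Derive_ext. intro; apply H. Qed.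

Lemma d_x_affine_u (f : fn3) (g g' h h' : R -> R) :
  (forall t x u, f t x u = g x + h x * u) ->
  (forall x, is_derive g x (g' x)) -> (forall x, is_derive h x (h' x)) ->
  forall t x u, d_x f t x u = g' x + h' x * u.
Proof.
  intros Hf Hg Hh t x u. rewrite (d_x_ext f (fun _ x u => g x + h x * u) Hf).
  apply is_derive_unique. auto_derive; [repeat split; eexists; eauto|].
  rewrite (is_derive_unique (fun y : R => g y) x _ (Hg x)), (is_derive_unique (fun y : R => h y) x _ (Hh x)).
  ring.
Qed.

Lemma d_u_affine_u (f : fn3) (g h : R -> R) :
  (forall t x u, f t x u = g x + h x * u) -> forall t x u, d_u f t x u = h x.
Proof.
  intros Hf t x u. rewrite (d_u_ext f (fun _ x u => g x + h x * u) Hf).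
  apply is_derive_unique. auto_derive; auto. ring.
Qed.

Definition fn_span (a b c d : R) : fn3 := fun t x u => a + b * t + c * exp (- x) + d * u.

Definition span_vf (c1 c2 c3 c4 c5 : R) : vfield :=
  VF (fn_span c3 c5 0 0) (fn_span (- c1) 0 0 0) (fn_span c4 0 (- c2) (- c5)).

Lemma vf_eq_iff (P Q : vfield) : vf_eq P Q <-> P = Q.
Proof.
  split.
  - destruct P as [pt px pu], Q as [qt qx qu]; intros H; cbn in H.
    f_equal; do 3 (apply functional_extensionality; intro); apply H.
  - intros -> t x u. split; [|split]; reflexivity.
Qed.

Lemma lincomb5_span_vf c1 c2 c3 c4 c5 : lincomb5 c1 c2 c3 c4 c5 = span_vf c1 c2 c3 c4 c5.
Proof.
  apply vf_eq_iff. intros t x u.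
  unfold lincomb5, vf_add, vf_scale, span_vf, fn_span, X1, X2, X3, X4, X5; cbn.
  split; [|split]; ring.
Qed.

Lemma in_span5_iff Q : in_span5 Q <-> exists c1 c2 c3 c4 c5, Q = span_vf c1 c2 c3 c4 c5.
Proof.
  unfold in_span5. setoid_rewrite vf_eq_iff. setoid_rewrite lincomb5_span_vf. reflexivity.
Qed.

Lemma is_derive_fn_span a b c d t x u :
  is_derive (fun s => fn_span a b c d s x u) t b /\
  is_derive (fun s => fn_span a b c d t s u) x (- c * exp (- x)) /\
  is_derive (fun s => fn_span a b c d t x s) u d.
Proof. unfold fn_span. split; [|split]; auto_derive; auto; ring. Qed.

Lemma d_t_fn_span a b c d : d_t (fn_span a b c d) = fn_span b 0 0 0.
Proof.
  extensionality t; extensionality x; extensionality u.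
  destruct (is_derive_fn_span a b c d t x u) as (Dt & _ & _).
  replace (fn_span _ _ _ _ t x u) with b by (unfold fn_span; ring).
  exact (is_derive_unique _ _ _ Dt).
Qed.

Lemma d_x_fn_span a b c d : d_x (fn_span a b c d) = fn_span 0 0 (- c) 0.
Proof.
  extensionality t; extensionality x; extensionality u.
  destruct (is_derive_fn_span a b c d t x u) as (_ & Dx & _).
  replace (fn_span _ _ _ _ t x u) with (- c * exp (- x)) by (unfold fn_span; ring).
  exact (is_derive_unique _ _ _ Dx).
Qed.

Lemma d_u_fn_span a b c d : d_u (fn_span a b c d) = fn_span d 0 0 0.
Proof.
  extensionality t; extensionality x; extensionality u.
  destruct (is_derive_fn_span a b c d t x u) as (_ & _ & Du).
  replace (fn_span _ _ _ _ t x u) with d by (unfold fn_span; ring).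
  exact (is_derive_unique _ _ _ Du).
Qed.

Lemma iterd_fn_span a b c d l : exists a' b' c' d', iterd l (fn_span a b c d) = fn_span a' b' c' d'.
Proof.
  induction l as [|i l (a' & b' & c' & d' & IH)]; [now exists a, b, c, d|].
  cbn [iterd]. rewrite IH. destruct i as [|[|i]]; cbn [pd].
  - rewrite d_t_fn_span. eauto.
  - rewrite d_x_fn_span. eauto.
  - rewrite d_u_fn_span. eauto.
Qed.

Lemma continuous_Rplus {U : UniformSpace} (f g : U -> R) x :
  continuous f x -> continuous g x -> continuous (fun y => f y + g y) x.
Proof. exact (continuous_plus f g x). Qed.

Lemma continuous_Rmult {U : UniformSpace} (f g : U -> R) x :
  continuous f x -> continuous g x -> continuous (fun y => f y * g y) x.
Proof. exact (continuous_mult f g x). Qed.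

Lemma continuous_fn_span a b c d (p : R * R * R) : continuous (unc3 (fn_span a b c d)) p.
Proof.
  destruct p as [[t x] u]. unfold unc3, fn_span.
  assert (Ct : continuous (fun p : R * R * R => fst (fst p)) (t, x, u)).
  { apply (continuous_comp fst fst). apply continuous_fst. apply continuous_fst. }
  assert (Cx : continuous (fun p : R * R * R => snd (fst p)) (t, x, u)).
  { apply (continuous_comp fst snd). apply continuous_fst. apply continuous_snd. }
  assert (Cu : continuous (fun p : R * R * R => snd p) (t, x, u)) by apply continuous_snd.
  assert (Cexp : continuous (fun p : R * R * R => exp (- snd (fst p))) (t, x, u)).
  { apply (continuous_comp (fun p : R * R * R => snd (fst p)) (fun y => exp (- y))); [exact Cx|].
    apply (ex_derive_continuous (fun y => exp (- y))). auto_derive. auto. }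
  assert (Cc : forall k : R, continuous (fun _ : R * R * R => k) (t, x, u))
    by (intro; apply continuous_const).
  apply continuous_Rplus; [apply continuous_Rplus; [apply continuous_Rplus|] |];
    try apply continuous_Rmult; auto.
Qed.

Lemma smooth3_fn_span a b c d : smooth3 (fn_span a b c d).
Proof.
  intros l t x u. destruct (iterd_fn_span a b c d l) as (a' & b' & c' & d' & ->).
  destruct (is_derive_fn_span a' b' c' d' t x u) as (Dt & Dx & Du).
  split; [apply continuous_fn_span|]. split; [|split]; eexists; [exact Dt | exact Dx | exact Du].
Qed.

Lemma span_vf_smooth c1 c2 c3 c4 c5 : smooth_vf (span_vf c1 c2 c3 c4 c5).
Proof. split; [|split]; apply smooth3_fn_span. Qed.

Lemma pr2_apply_DeltaEq Q t x u p q w s r :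
  pr2_apply Q DeltaEq t x u p q w s r =
  eta_t Q t x u p q + 2 * (q + r) * (eta_x Q t x u p q + eta_xx Q t x u p q w s r).
Proof.
  unfold pr2_apply, DeltaEq.
  rewrite !Derive_const.
  assert (Dp : Derive (fun z => z + (q + r) ^ 2) p = 1)
    by (apply is_derive_unique; auto_derive; auto; ring).
  assert (Dq : Derive (fun z => p + (z + r) ^ 2) q = 2 * (q + r))
    by (apply is_derive_unique; auto_derive; auto; ring).
  assert (Dr : Derive (fun z => p + (q + z) ^ 2) r = 2 * (q + r))
    by (apply is_derive_unique; auto_derive; auto; ring).
  rewrite Dp, Dq, Dr. ring.
Qed.

(* Olver's eta^xx written out at the jet point p = u_t, q = u_x, s = u_tx, r = u_xx
   (u_tt does not occur). *)
Definition eta_xx_explicit (Q : vfield) (t x u p q s r : R) : R :=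
  let ta := v_t Q in let xi := v_x Q in let et := v_u Q in
  (d_x (d_x et) t x u + q * (d_x (d_u et) t x u + d_u (d_x et) t x u)
     + q ^ 2 * d_u (d_u et) t x u)
  - p * (d_x (d_x ta) t x u + q * (d_x (d_u ta) t x u + d_u (d_x ta) t x u)
     + q ^ 2 * d_u (d_u ta) t x u)
  - q * (d_x (d_x xi) t x u + q * (d_x (d_u xi) t x u + d_u (d_x xi) t x u)
     + q ^ 2 * d_u (d_u xi) t x u)
  - 2 * s * (d_x ta t x u + q * d_u ta t x u)
  + r * (d_u et t x u - p * d_u ta t x u - 2 * d_x xi t x u - 3 * q * d_u xi t x u).

Section Eta_x_partials.

Variable Q : vfield.
Hypothesis Q_smooth : smooth_vf Q.
Variables t x u p q : R.

Lemma Derive_eta_x_x : Derive (fun z => eta_x Q t z u p q) x =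
  d_x (d_x (v_u Q)) t x u + q * d_x (d_u (v_u Q)) t x u
  - p * (d_x (d_x (v_t Q)) t x u + q * d_x (d_u (v_t Q)) t x u)
  - q * (d_x (d_x (v_x Q)) t x u + q * d_x (d_u (v_x Q)) t x u).
Proof.
  destruct Q_smooth as [Ht [Hx Hu]].
  apply is_derive_unique. unfold eta_x, TD0x. auto_derive; [repeat split; ex_derive_smooth |].
  rewrite ?fold_d_x, ?fold_d_u. ring.
Qed.

Lemma Derive_eta_x_u : Derive (fun z => eta_x Q t x z p q) u =
  d_u (d_x (v_u Q)) t x u + q * d_u (d_u (v_u Q)) t x u
  - p * (d_u (d_x (v_t Q)) t x u + q * d_u (d_u (v_t Q)) t x u)
  - q * (d_u (d_x (v_x Q)) t x u + q * d_u (d_u (v_x Q)) t x u).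
Proof.
  destruct Q_smooth as [Ht [Hx Hu]].
  apply is_derive_unique. unfold eta_x, TD0x. auto_derive; [repeat split; ex_derive_smooth |].
  rewrite ?fold_d_x, ?fold_d_u. ring.
Qed.

Lemma Derive_eta_x_ut : Derive (fun z => eta_x Q t x u z q) p =
  - (d_x (v_t Q) t x u + q * d_u (v_t Q) t x u).
Proof. apply is_derive_unique. unfold eta_x, TD0x. auto_derive; [auto | ring]. Qed.

Lemma Derive_eta_x_ux : Derive (fun z => eta_x Q t x u p z) q =
  d_u (v_u Q) t x u - p * d_u (v_t Q) t x u
  - (d_x (v_x Q) t x u + 2 * q * d_u (v_x Q) t x u).
Proof. apply is_derive_unique. unfold eta_x, TD0x. auto_derive; [auto | ring]. Qed.

Lemma eta_xx_explicitE w s r :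
  eta_xx Q t x u p q w s r = eta_xx_explicit Q t x u p q s r.
Proof.
  unfold eta_xx, TD1x.
  rewrite Derive_eta_x_x, Derive_eta_x_u, Derive_eta_x_ut, Derive_eta_x_ux.
  unfold eta_xx_explicit, TD0x. ring.
Qed.

End Eta_x_partials.

Lemma symmetry_criterion_on_shell Q : in_max_Lie_algebra DeltaEq Q ->
  forall t x u q r s,
  eta_t Q t x u (- (q + r) ^ 2) q
  + 2 * (q + r) * (eta_x Q t x u (- (q + r) ^ 2) q + eta_xx_explicit Q t x u (- (q + r) ^ 2) q s r)
  = 0.
Proof.
  intros [HS HI] t x u q r s.
  rewrite <- (eta_xx_explicitE Q HS t x u _ q 0), <- pr2_apply_DeltaEq.
  apply HI. unfold DeltaEq. ring.
Qed.

Lemma symmetry_v_t_d_x_d_u_eq0 Q : in_max_Lie_algebra DeltaEq Q ->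
  (forall t x u, d_x (v_t Q) t x u = 0) /\ (forall t x u, d_u (v_t Q) t x u = 0).
Proof.
  intros HQ.
  (* u_tx = s enters the criterion only through -4 (q + r) s (tau_x + q tau_u). *)
  assert (H : forall t x u q r, (q + r) * (d_x (v_t Q) t x u + q * d_u (v_t Q) t x u) = 0).
  { intros t x u q r.
    pose proof (symmetry_criterion_on_shell Q HQ t x u q r 0) as H0.
    pose proof (symmetry_criterion_on_shell Q HQ t x u q r 1) as H1.
    unfold eta_xx_explicit in H0, H1. lra. }
  split; intros t x u.
  - pose proof (H t x u 0 1). lra.
  - pose proof (H t x u 0 1). pose proof (H t x u 1 0). lra.
Qed.

Lemma poly_coeffs_eq0 c0 c1 a b c d e f :
  (forall m q, c0 + c1 * q + m * (a + b * q + c * q ^ 2 + d * q ^ 3) + m ^ 2 * (e + f * q) = 0) ->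
  c0 = 0 /\ c1 = 0 /\ a = 0 /\ b = 0 /\ c = 0 /\ d = 0 /\ e = 0 /\ f = 0.
Proof.
  intros H.
  pose proof (H 0 0). pose proof (H 0 1). pose proof (H 1 0). pose proof (H 1 1).
  pose proof (H 1 (-1)). pose proof (H 1 2). pose proof (H (-1) 0). pose proof (H (-1) 1).
  pose proof (H (-1) (-1)). pose proof (H (-1) 2).
  repeat split; lra.
Qed.

Lemma symmetry_determining_equations Q : in_max_Lie_algebra DeltaEq Q ->
  let ta := v_t Q in let xi := v_x Q in let et := v_u Q in
  forall t x u,
  d_x ta t x u = 0 /\ d_u ta t x u = 0 /\ d_t xi t x u = 0 /\ d_u xi t x u = 0 /\
  d_t et t x u = 0 /\ d_u et t x u = 4 * d_x xi t x u - d_t ta t x u /\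
  d_x et t x u + d_x (d_x et) t x u = 0 /\
  d_x xi t x u + d_u (d_x et) t x u + d_x (d_u et) t x u = d_x (d_x xi) t x u.
Proof.
  intros HQ ta xi et t x u.
  destruct (symmetry_v_t_d_x_d_u_eq0 Q HQ) as [Htx Htu].
  assert (Htxx : forall t x u, d_x (d_x ta) t x u = 0)
    by (intros; apply Derive_ext_eq0; intro; apply Htx).
  assert (Htxu : forall t x u, d_u (d_x ta) t x u = 0)
    by (intros; apply Derive_ext_eq0; intro; apply Htx).
  assert (Htux : forall t x u, d_x (d_u ta) t x u = 0)
    by (intros; apply Derive_ext_eq0; intro; apply Htu).
  assert (Htuu : forall t x u, d_u (d_u ta) t x u = 0)
    by (intros; apply Derive_ext_eq0; intro; apply Htu).
  destruct (poly_coeffs_eq0 (d_t et t x u) (- d_t xi t x u)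
    (2 * (d_x et t x u + d_x (d_x et) t x u))
    (2 * (d_x xi t x u + d_u (d_x et) t x u + d_x (d_u et) t x u - d_x (d_x xi) t x u))
    (2 * (d_u (d_u et) t x u - d_u (d_x xi) t x u - d_x (d_u xi) t x u + 2 * d_u xi t x u))
    (-2 * d_u (d_u xi) t x u)
    (d_u et t x u + d_t ta t x u - 4 * d_x xi t x u) (-5 * d_u xi t x u))
    as (E1 & E2 & E3 & E4 & _ & _ & E5 & E6).
  (* with m = u_x + u_xx the criterion is a polynomial in m and q = u_x *)
  { intros m q.
    rewrite <- (symmetry_criterion_on_shell Q HQ t x u q (m - q) 0).
    unfold eta_t, eta_x, eta_xx_explicit, TD0t, TD0x. subst ta xi et.
    rewrite Htx, Htu, Htxx, Htxu, Htux, Htuu.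
    replace (q + (m - q)) with m by ring. ring. }
  repeat split; auto; lra.
Qed.

Section Determining_system.

Variables ta xi et : fn3.
Hypotheses (ta_smooth : smooth3 ta) (xi_smooth : smooth3 xi) (et_smooth : smooth3 et).
Hypotheses (ta_x : forall t x u, d_x ta t x u = 0) (ta_u : forall t x u, d_u ta t x u = 0)
  (xi_t : forall t x u, d_t xi t x u = 0) (xi_u : forall t x u, d_u xi t x u = 0)
  (et_t : forall t x u, d_t et t x u = 0).
Hypothesis et_u : forall t x u, d_u et t x u = 4 * d_x xi t x u - d_t ta t x u.
Hypothesis et_x : forall t x u, d_x et t x u + d_x (d_x et) t x u = 0.
Hypothesis xi_x :
  forall t x u, d_x xi t x u + d_u (d_x et) t x u + d_x (d_u et) t x u = d_x (d_x xi) t x u.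

Lemma ta_of_t t x u : ta t x u = ta t 0 0.
Proof. rewrite (d_x_eq0_const ta ta_smooth ta_x). apply (d_u_eq0_const ta ta_smooth ta_u). Qed.

Lemma xi_of_x t x u : xi t x u = xi 0 x 0.
Proof. rewrite (d_t_eq0_const xi xi_smooth xi_t). apply (d_u_eq0_const xi xi_smooth xi_u). Qed.

Lemma et_of_xu t x u : et t x u = et 0 x u.
Proof. apply (d_t_eq0_const et et_smooth et_t). Qed.

Lemma d_x_xi_of_x t x u : d_x xi t x u = d_x xi 0 x 0.
Proof. exact (d_x_ext _ (fun _ x _ => xi 0 x 0) xi_of_x t x u). Qed.

Lemma d_t_ta_const t x u : d_t ta t x u = d_t ta 0 0 0.
Proof.
  assert (Dt : forall t, d_t ta t x u = d_t ta t 0 0)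
    by exact (fun t => d_t_ext _ (fun t _ _ => ta t 0 0) ta_of_t t x u).
  assert (Du : forall t, d_u et t 0 0 = d_u et 0 0 0)
    by exact (fun t => d_u_ext _ (fun _ x u => et 0 x u) et_of_xu t 0 0).
  pose proof (et_u t 0 0). pose proof (et_u 0 0 0). pose proof (Du t).
  pose proof (d_x_xi_of_x t 0 0). rewrite Dt. lra.
Qed.

Lemma ta_affine t x u : ta t x u = ta 0 0 0 + d_t ta 0 0 0 * t.
Proof.
  rewrite ta_of_t. apply (Derive_const_affine (fun s => ta s 0 0)).
  - intro; ex_derive_smooth.
  - intro z. exact (d_t_ta_const z 0 0).
Qed.

Lemma et_affine_u t x u : et t x u = et 0 x 0 + (4 * d_x xi 0 x 0 - d_t ta 0 0 0) * u.
Proof.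
  rewrite et_of_xu. apply (Derive_const_affine (fun s => et 0 x s)).
  - intro; ex_derive_smooth.
  - intro z. rewrite fold_d_u, et_u, d_x_xi_of_x, d_t_ta_const. reflexivity.
Qed.

Lemma d_x_et_affine_u t x u :
  d_x et t x u = d_x et 0 x 0 + 4 * d_x (d_x xi) 0 x 0 * u.
Proof.
  apply (d_x_affine_u et (fun x => et 0 x 0) (fun x => d_x et 0 x 0)
    (fun x => 4 * d_x xi 0 x 0 - d_t ta 0 0 0) (fun x => 4 * d_x (d_x xi) 0 x 0));
    [exact et_affine_u | intro y; apply Derive_correct; ex_derive_smooth |].
  intro y. auto_derive; [ex_derive_smooth | rewrite fold_d_x; ring].
Qed.

Lemma xi_ode1 x : d_x xi 0 x 0 + 7 * d_x (d_x xi) 0 x 0 = 0.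
Proof.
  assert (Dux : d_u (d_x et) 0 x 0 = 4 * d_x (d_x xi) 0 x 0)
    by exact (d_u_affine_u _ (fun x => d_x et 0 x 0) (fun x => 4 * d_x (d_x xi) 0 x 0)
                d_x_et_affine_u 0 x 0).
  assert (Dxu : d_x (d_u et) 0 x 0 = 4 * d_x (d_x xi) 0 x 0).
  { rewrite (d_x_affine_u (d_u et) (fun x => 4 * d_x xi 0 x 0 - d_t ta 0 0 0)
      (fun x => 4 * d_x (d_x xi) 0 x 0) (fun _ => 0) (fun _ => 0)); [ring | | |].
    - intros t y u. rewrite et_u, d_x_xi_of_x, d_t_ta_const. ring.
    - intro y. auto_derive; [ex_derive_smooth | rewrite fold_d_x; ring].
    - intro y. auto_derive; auto. }
  pose proof (xi_x 0 x 0). lra.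
Qed.

Lemma xi_ode2 x : d_x (d_x xi) 0 x 0 + d_x (d_x (d_x xi)) 0 x 0 = 0.
Proof.
  assert (Dxx : forall u, d_x (d_x et) 0 x u = d_x (d_x et) 0 x 0 + 4 * d_x (d_x (d_x xi)) 0 x 0 * u).
  { intro u. apply (d_x_affine_u (d_x et) (fun x => d_x et 0 x 0) (fun x => d_x (d_x et) 0 x 0)
      (fun x => 4 * d_x (d_x xi) 0 x 0) (fun x => 4 * d_x (d_x (d_x xi)) 0 x 0));
      [exact d_x_et_affine_u | intro y; apply Derive_correct; ex_derive_smooth |].
    intro y. auto_derive; [ex_derive_smooth | rewrite fold_d_x; ring]. }
  pose proof (et_x 0 x 1). pose proof (et_x 0 x 0).
  rewrite d_x_et_affine_u, Dxx in *. lra.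
Qed.

Lemma xi_const t x u : xi t x u = xi 0 0 0.
Proof.
  assert (Hx : forall x, d_x xi 0 x 0 = 0).
  { apply (ode_pair_eq0 7 1 (fun x => d_x xi 0 x 0)); [lra | intro; ex_derive_smooth
    | | exact xi_ode1 | intro z; rewrite Rmult_1_l; exact (xi_ode2 z)].
    intro z. exact (smooth3_ex_derive_x xi (1 :: 1 :: nil)%nat 0 z 0 xi_smooth). }
  rewrite xi_of_x. apply (Derive_0_const (fun x => xi 0 x 0)); [intro; ex_derive_smooth | exact Hx].
Qed.

Lemma et_explicit t x u :
  et t x u = et 0 0 0 + d_x et 0 0 0 * (1 - exp (- x)) - d_t ta 0 0 0 * u.
Proof.
  assert (Hxi : forall x, d_x xi 0 x 0 = 0).
  { intro y. rewrite (d_x_ext _ (fun _ _ _ => xi 0 0 0) xi_const). unfold d_x. apply Derive_const. }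
  rewrite et_affine_u, Hxi, (ode_d1_d2_solution (fun x => et 0 x 0)).
  - rewrite fold_d_x. ring.
  - intro; ex_derive_smooth.
  - intro z. exact (smooth3_ex_derive_x et (1 :: nil)%nat 0 z 0 et_smooth).
  - intro y. exact (et_x 0 y 0).
Qed.

Lemma determining_solution : in_span5 (VF ta xi et).
Proof.
  apply in_span5_iff.
  exists (- xi 0 0 0), (d_x et 0 0 0), (ta 0 0 0), (et 0 0 0 + d_x et 0 0 0), (d_t ta 0 0 0).
  apply vf_eq_iff. intros t x u. unfold span_vf, fn_span; cbn [v_t v_x v_u].
  rewrite (ta_affine t x u), (xi_const t x u), (et_explicit t x u). split; [|split]; ring.
Qed.

End Determining_system.

Lemma span_vf_symmetry c1 c2 c3 c4 c5 : infinitesimal_symmetry DeltaEq (span_vf c1 c2 c3 c4 c5).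
Proof.
  intros t x u p q w s r HD.
  rewrite pr2_apply_DeltaEq, eta_xx_explicitE by apply span_vf_smooth.
  unfold eta_t, eta_x, eta_xx_explicit, TD0t, TD0x, span_vf; cbn [v_t v_x v_u].
  repeat rewrite ?d_t_fn_span, ?d_x_fn_span, ?d_u_fn_span.
  unfold DeltaEq in HD. replace p with (- (q + r) ^ 2) by lra.
  unfold fn_span. ring.
Qed.

Lemma lincomb5_independent c1 c2 c3 c4 c5 :
  vf_eq (lincomb5 c1 c2 c3 c4 c5) vf_zero -> c1 = 0 /\ c2 = 0 /\ c3 = 0 /\ c4 = 0 /\ c5 = 0.
Proof.
  rewrite lincomb5_span_vf. intros H.
  destruct (H 0 0 0) as (T0 & X0 & U0). destruct (H 1 1 0) as (T1 & _ & U1).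
  unfold span_vf, fn_span in *; cbn in *. rewrite Ropp_0, exp_0 in U0.
  assert (He : exp (Ropp 1) < exp 0) by (apply exp_increasing; lra). rewrite exp_0 in He.
  assert (Hc2 : c2 * (1 - exp (Ropp 1)) = 0) by lra.
  destruct (Rmult_integral _ _ Hc2); [|lra].
  repeat split; lra.
Qed.

Lemma vf_bracket_span_vf a1 a2 a3 a4 a5 b1 b2 b3 b4 b5 :
  vf_bracket (span_vf a1 a2 a3 a4 a5) (span_vf b1 b2 b3 b4 b5) =
  span_vf 0 (a1 * b2 - a2 * b1 + a5 * b2 - a2 * b5) (a3 * b5 - a5 * b3) (a5 * b4 - a4 * b5) 0.
Proof.
  apply vf_eq_iff. intros t x u.
  unfold vf_bracket, vf_apply, span_vf; cbn [v_t v_x v_u].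
  rewrite ?d_t_fn_span, ?d_x_fn_span, ?d_u_fn_span.
  unfold fn_span. split; [|split]; ring.
Qed.

Lemma X1_span_vf : X1 = span_vf 1 0 0 0 0.
Proof. apply vf_eq_iff. intros t x u. unfold X1, span_vf, fn_span; cbn. split; [|split]; ring. Qed.
Lemma X2_span_vf : X2 = span_vf 0 1 0 0 0.
Proof. apply vf_eq_iff. intros t x u. unfold X2, span_vf, fn_span; cbn. split; [|split]; ring. Qed.
Lemma X3_span_vf : X3 = span_vf 0 0 1 0 0.
Proof. apply vf_eq_iff. intros t x u. unfold X3, span_vf, fn_span; cbn. split; [|split]; ring. Qed.
Lemma X4_span_vf : X4 = span_vf 0 0 0 1 0.
Proof. apply vf_eq_iff. intros t x u. unfold X4, span_vf, fn_span; cbn. split; [|split]; ring. Qed.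
Lemma X5_span_vf : X5 = span_vf 0 0 0 0 1.
Proof. apply vf_eq_iff. intros t x u. unfold X5, span_vf, fn_span; cbn. split; [|split]; ring. Qed.

Lemma symmetry_in_span5 Q : in_max_Lie_algebra DeltaEq Q -> in_span5 Q.
Proof.
  intros HQ. pose proof (symmetry_determining_equations Q HQ) as E. cbv zeta in E.
  destruct HQ as [[Ht [Hx Hu]] _]. destruct Q as [ta xi et]; cbn [v_t v_x v_u] in *.
  apply determining_solution; try assumption; intros t x u;
    destruct (E t x u) as (? & ? & ? & ? & ? & ? & ? & ?); assumption.
Qed.

Lemma span5_in_max_Lie_algebra Q : in_span5 Q -> in_max_Lie_algebra DeltaEq Q.
Proof.
  intros HQ. apply in_span5_iff in HQ as (c1 & c2 & c3 & c4 & c5 & ->).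
  split; [apply span_vf_smooth | apply span_vf_symmetry].
Qed.

Theorem mainTheorem2 :
  (* the maximal Lie invariance algebra is exactly span{X1,...,X5} *)
  (forall Q : vfield, in_max_Lie_algebra DeltaEq Q <-> in_span5 Q) /\
  (* X1,...,X5 are linearly independent, so the algebra is 5-dimensional *)
  (forall c1 c2 c3 c4 c5 : R, vf_eq (lincomb5 c1 c2 c3 c4 c5) vf_zero ->
     c1 = 0 /\ c2 = 0 /\ c3 = 0 /\ c4 = 0 /\ c5 = 0) /\
  (* commutation relations: the only nonzero ones are the four listed *)
  vf_eq (vf_bracket X1 X2) X2 /\
  vf_eq (vf_bracket X1 X3) vf_zero /\
  vf_eq (vf_bracket X1 X4) vf_zero /\
  vf_eq (vf_bracket X1 X5) vf_zero /\
  vf_eq (vf_bracket X2 X3) vf_zero /\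
  vf_eq (vf_bracket X2 X4) vf_zero /\
  vf_eq (vf_bracket X2 X5) (vf_scale (-1) X2) /\
  vf_eq (vf_bracket X3 X4) vf_zero /\
  vf_eq (vf_bracket X3 X5) X3 /\
  vf_eq (vf_bracket X4 X5) (vf_scale (-1) X4).
Proof.
  split; [intro Q; split; [apply symmetry_in_span5 | apply span5_in_max_Lie_algebra] |].
  split; [exact lincomb5_independent |].
  rewrite X1_span_vf, X2_span_vf, X3_span_vf, X4_span_vf, X5_span_vf, !vf_bracket_span_vf.
  unfold vf_eq, vf_zero, vf_scale, span_vf, fn_span; cbn [v_t v_x v_u].
  repeat match goal with |- _ /\ _ => split | |- forall _, _ => intro end; ring.
Qed.
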